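(* Let $P$ be a program and $M$ a mode for $P$. If (i) $P$ is linear, (ii) $P$ is safe w.r.t. $M$, (iii) $P$ satisfies $M$, and (iv) the non-unit clauses of $P$ are pairwise mutually exclusive w.r.t. $M$, then $P$ is semideterministic w.r.t. $M$.
   Context: Syntax. Predicate symbols $\mathit{true}$, $=$, $\neq$ are basic, all others non-basic; the set of function symbols is infinite. Basic atoms: $\mathit{true}$, $t_1=t_2$, $t_1\neq t_2$ (disequation); non-basic atoms: $p(t_1,\dots,t_m)$ with $p$ non-basic. A goal is a conjunction of atoms ('','' associative, neutral element $\mathit{true}$); a goal containing only basic atoms is basic. A clause $C$ is $A\leftarrow G$ with non-basic head $hd(C)$ and body $bd(C)$; it is a unit clause iff its body is a basic goal. A program is a set of clauses; it is linear iff every clause has at most one non-basic atom in its body. All mgu's are relevant and idempotent. A variable $X$ is a local variable of goal $G$ in clause $H\leftarrow G_1,G,G_2$ iff $X\in vars(G)-vars(H,G_1,G_2)$. Operational semantics (program $P$): (1) $(t_1=t_2,G)\longmapsto_P G\vartheta$ if $t_1,t_2$ unify with mgu $\vartheta$; (2) $(t_1\neq t_2,G)\longmapsto_P G$ if $t_1,t_2$ are not unifiable; (3) $(A,G)\longmapsto_P(bd(C),G)\vartheta$ if $A$ is non-basic, $C$ is a renamed apart clause of $P$ and $\vartheta$ an mgu of $A$ and $hd(C)$ — a step ''using $C$''. $\longmapsto^*_P$ is the reflexive-transitive closure. For $C\in P$ and a goal $(A_0,G_0)$ with $A_0$ non-basic, $(A_0,G_0)\Rightarrow_C(A_n,G_n)$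 iff there is a derivation $(A_0,G_0)\longmapsto_P\cdots\longmapsto_P(A_n,G_n)$ with $n>0$, whose first step uses $C$, with $A_i$ basic for $i=1,\dots,n-1$, and either $A_n$ non-basic or $(A_n,G_n)$ equal to $\mathit{true}$. $G_0\Rightarrow^*_P G_n$ iff $G_0\Rightarrow_{C_1}\cdots\Rightarrow_{C_n}G_n$ for some clauses $C_1,\dots,C_n$ of $P$ ($n\ge0$). Semideterminism. $P$ is semideterministic for a non-basic atom $A$ iff for each goal $G$ with $A\Rightarrow^*_P G$ there is at most one clause $C$ such that $G\Rightarrow_C G'$ for some goal $G'$ different from $\mathit{true}$. $P$ is semideterministic w.r.t. $M$ iff it is semideterministic for every non-basic atom satisfying $M$. Modes. A mode for non-basic $p$ of arity $h$ is $p(m_1,\dots,m_h)$, $m_i\in\{+,?\}$; $t_i$ is an input argument iff $m_i=+$; variables in input arguments are input variables. A mode for a program contains exactly one mode per non-basic predicate occurring in it. An atom satisfies $M$ iff $M$ has a mode for its predicate and its input arguments are ground. $P$ satisfies $M$ iff for every non-basic $A_0$ satisfying $M$ and every non-basic $A$ and goal $G$ with $A_0\longmapsto^*_P(A,G)$, $A$ satisfies $M$. A clause is safe w.r.t. $M$ iff every variable of every disequation in its body is an input variable of its head or a local variable of that disequation in the clause; a program is safe iff all its clauses are. Satisfiability. A ground basic goal holds iff each of its atoms is $\mathit{true}$, $t=t$, or $t_1\neq t_2$ with $t_1,t_2$ distinct ground terms. For a set $V$ of variables, a conjunction $D$ of disequations is satisfiable w.r.t. $V$ iff there is a ground substitution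 $\sigma$ with domain $V$ such that every ground instance of $D\sigma$ holds. Guard. $grd(C)$ is $bd(C)$ if all atoms of $bd(C)$ are disequations, and otherwise the (possibly empty) conjunction of the disequations of $bd(C)$ to the left of the leftmost atom which is not a disequation. Mutual exclusion. Let $C_1: p(t_1,u_1)\leftarrow G_1$ and $C_2: p(t_2,u_2)\leftarrow G_2$ be renamed apart clauses, where $t_1,t_2$ are the tuples of input arguments of $p$ under $M$ and $u_1,u_2$ the remaining arguments. $C_1,C_2$ are mutually exclusive w.r.t. $M$ iff either $t_1,t_2$ are not unifiable, or they are unifiable via an mgu $\vartheta$ and $(grd(C_1),grd(C_2))\vartheta$ is not satisfiable w.r.t. $vars(t_1,t_2)$ (empty tuples are unifiable via the identity substitution). *)

From Stdlib Require Import List.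
Import ListNotations.

Inductive term : Type :=
| Var : nat -> term
| Fn  : nat -> list term -> term.

(* Atoms.  The basic predicate [true] is the neutral element of ",", so a
   goal is represented as a list of atoms with [true] normalised away:
   the empty list is the goal [true]. *)
Inductive atom : Type :=
| AEq   : term -> term -> atom
| ANeq  : term -> term -> atom
| APred : nat -> list term -> atom.

Definition goal := list atom.

Definition basic (A : atom) : Prop :=
  match A with APred _ _ => False | _ => True end.
Definition nonbasic (A : atom) : Prop :=
  match A with APred _ _ => True | _ => False end.
Definition basic_goal (G : goal) : Prop := Forall basic G.

Record clause : Type := Clause {
  hd_pred : nat;
  hd_args : list term;
  bd : goal
}.
Definition hd (C : clause) : atom := APred (hd_pred C) (hd_args C).

Definition unit_clause (C : clause) : Prop := basic_goal (bd C).

Definition program := list clause.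

Definition linear (P : program) : Prop :=
  forall C, In C P ->
    length (filter (fun A => match A with APred _ _ => true | _ => false end)
                   (bd C)) <= 1.

Fixpoint tvars (t : term) : list nat :=
  match t with
  | Var x => [x]
  | Fn _ ts => flat_map tvars ts
  end.
Definition tsvars (ts : list term) : list nat := flat_map tvars ts.

Definition avars (A : atom) : list nat :=
  match A with
  | AEq t u | ANeq t u => tvars t ++ tvars u
  | APred _ ts => tsvars ts
  end.
Definition gvars (G : goal) : list nat := flat_map avars G.
Definition cvars (C : clause) : list nat := tsvars (hd_args C) ++ gvars (bd C).

Definition ground (t : term) : Prop := tvars t = [].

Definition subst := nat -> term.

Fixpoint tsubst (s : subst) (t : term) : term :=
  match t with
  | Var x => s x
  | Fn f ts => Fn f (map (tsubst s) ts)
  end.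
Definition asubst (s : subst) (A : atom) : atom :=
  match A with
  | AEq t u => AEq (tsubst s t) (tsubst s u)
  | ANeq t u => ANeq (tsubst s t) (tsubst s u)
  | APred p ts => APred p (map (tsubst s) ts)
  end.
Definition gsubst (s : subst) (G : goal) : goal := map (asubst s) G.

Definition unifier (th : subst) (ts us : list term) : Prop :=
  map (tsubst th) ts = map (tsubst th) us.
Definition unifiable (ts us : list term) : Prop := exists th, unifier th ts us.

(* relevant, idempotent most general unifier of two tuples of terms *)
Definition mgu (th : subst) (ts us : list term) : Prop :=
  unifier th ts us /\
  (forall s, unifier s ts us -> exists d, forall x, s x = tsubst d (th x)) /\
  (forall x, tsubst th (th x) = th x) /\
  (forall x, th x <> Var x ->
     In x (tsvars ts ++ tsvars us) /\
     incl (tvars (th x)) (tsvars ts ++ tsvars us)).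

Definition renaming (r : nat -> nat) : subst := fun x => Var (r x).
Definition rename_clause (r : nat -> nat) (C : clause) : clause :=
  Clause (hd_pred C) (map (tsubst (renaming r)) (hd_args C))
         (gsubst (renaming r) (bd C)).

Definition renamed_apart (C' C : clause) (V : list nat) : Prop :=
  exists r, (forall x y, r x = r y -> x = y) /\
            C' = rename_clause r C /\
            (forall x, In x (cvars C') -> ~ In x V).

Inductive step (P : program) : option clause -> goal -> goal -> Prop :=
| step_eq : forall t1 t2 G th,
    mgu th [t1] [t2] ->
    step P None (AEq t1 t2 :: G) (gsubst th G)
| step_neq : forall t1 t2 G,
    ~ unifiable [t1] [t2] ->
    step P None (ANeq t1 t2 :: G) G
| step_res : forall p ts G C C' th,
    In C P ->
    renamed_apart C' C (gvars (APred p ts :: G)) ->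
    p = hd_pred C' ->
    mgu th ts (hd_args C') ->
    step P (Some C) (APred p ts :: G) (gsubst th (bd C' ++ G)).

Definition step_any (P : program) (G G' : goal) : Prop :=
  exists oc, step P oc G G'.

Inductive steps (P : program) : goal -> goal -> Prop :=
| steps_refl : forall G, steps P G G
| steps_trans : forall G1 G2 G3, step_any P G1 G2 -> steps P G2 G3 -> steps P G1 G3.

Inductive basic_run (P : program) : goal -> goal -> Prop :=
| br_stop_true : basic_run P [] []
| br_stop_nb : forall A G, nonbasic A -> basic_run P (A :: G) (A :: G)
| br_step : forall A G G1 G2,
    basic A -> step_any P (A :: G) G1 -> basic_run P G1 G2 ->
    basic_run P (A :: G) G2.

Definition big_step (P : program) (C : clause) (G G' : goal) : Prop :=
  exists G1, step P (Some C) G G1 /\ basic_run P G1 G'.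

Inductive big_steps (P : program) : goal -> goal -> Prop :=
| bs_refl : forall G, big_steps P G G
| bs_trans : forall C G1 G2 G3,
    In C P -> big_step P C G1 G2 -> big_steps P G2 G3 -> big_steps P G1 G3.

Definition semidet_atom (P : program) (A : atom) : Prop :=
  forall G, big_steps P [A] G ->
  forall C1 C2 G1 G2,
    In C1 P -> In C2 P ->
    big_step P C1 G G1 -> G1 <> [] ->
    big_step P C2 G G2 -> G2 <> [] ->
    C1 = C2.

(* A set of modes: [M p h = Some ms] is the mode of the predicate p/h;
   [true] stands for '+' (input) and [false] for '?'. *)
Definition mode := nat -> nat -> option (list bool).

Definition occurs_pred (P : program) (p h : nat) : Prop :=
  exists C, In C P /\
    ((hd_pred C = p /\ length (hd_args C) = h) \/
     (exists ts, In (APred p ts) (bd C) /\ length ts = h)).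

Definition mode_for (M : mode) (P : program) : Prop :=
  (forall p h ms, M p h = Some ms -> length ms = h) /\
  (forall p h, (exists ms, M p h = Some ms) <-> occurs_pred P p h).

Definition input_args (M : mode) (p : nat) (ts : list term) : list term :=
  match M p (length ts) with
  | Some ms => map snd (filter (fun bt => fst bt) (combine ms ts))
  | None => []
  end.
Definition sat_mode (M : mode) (A : atom) : Prop :=
  match A with
  | APred p ts => (exists ms, M p (length ts) = Some ms) /\
                  Forall ground (input_args M p ts)
  | _ => False
  end.

Definition semidet (P : program) (M : mode) : Prop :=
  forall A, nonbasic A -> sat_mode M A -> semidet_atom P A.

Definition program_satisfies (P : program) (M : mode) : Prop :=
  forall A0, nonbasic A0 -> sat_mode M A0 ->
  forall A G, steps P [A0] (A :: G) -> nonbasic A -> sat_mode M A.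

Definition input_vars_head (M : mode) (C : clause) : list nat :=
  tsvars (input_args M (hd_pred C) (hd_args C)).

Definition safe_clause (M : mode) (C : clause) : Prop :=
  forall G1 t1 t2 G2, bd C = G1 ++ ANeq t1 t2 :: G2 ->
  forall x, In x (avars (ANeq t1 t2)) ->
    In x (input_vars_head M C) \/
    (* local variable of the disequation in C *)
    ~ In x (tsvars (hd_args C) ++ gvars G1 ++ gvars G2).

Definition safe (P : program) (M : mode) : Prop :=
  forall C, In C P -> safe_clause M C.

Definition atom_holds (A : atom) : Prop :=
  match A with
  | AEq t u => t = u
  | ANeq t u => t <> u
  | APred _ _ => False
  end.
Definition goal_holds (G : goal) : Prop := Forall atom_holds G.

Definition ground_subst (r : subst) : Prop := forall x, ground (r x).

Definition disequations (D : goal) : Prop :=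
  Forall (fun A => match A with ANeq _ _ => True | _ => False end) D.

Definition satisfiable_wrt (V : list nat) (D : goal) : Prop :=
  exists s : subst,
    (forall x, In x V -> ground (s x)) /\
    (forall x, ~ In x V -> s x = Var x) /\
    (forall r, ground_subst r -> goal_holds (gsubst r (gsubst s D))).

Definition is_neq (A : atom) : bool :=
  match A with ANeq _ _ => true | _ => false end.

Fixpoint neq_prefix (G : goal) : goal :=
  match G with
  | [] => []
  | A :: G' => if is_neq A then A :: neq_prefix G' else []
  end.

Definition grd (C : clause) : goal :=
  if forallb is_neq (bd C) then bd C else neq_prefix (bd C).

(* C1, C2 (assumed renamed apart, heads with the same predicate) *)
Definition mutually_exclusive (M : mode) (C1 C2 : clause) : Prop :=
  let t1 := input_args M (hd_pred C1) (hd_args C1) in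
  let t2 := input_args M (hd_pred C2) (hd_args C2) in
  ~ unifiable t1 t2 \/
  (exists th, mgu th t1 t2 /\
     ~ satisfiable_wrt (tsvars t1 ++ tsvars t2) (gsubst th (grd C1 ++ grd C2))).

Definition nonunit_pairwise_ME (P : program) (M : mode) : Prop :=
  forall C1 C2, In C1 P -> In C2 P -> C1 <> C2 ->
    ~ unit_clause C1 -> ~ unit_clause C2 ->
    hd_pred C1 = hd_pred C2 -> length (hd_args C1) = length (hd_args C2) ->
    forall C2', renamed_apart C2' C2 (cvars C1) ->
      mutually_exclusive M C1 C2'.

From Stdlib Require Import List Arith Lia Classical.
Import ListNotations.

(* Linearity keeps at most one non-basic atom in every goal reached from a
   single atom, so the selected atom is the only one, and a unit clause
   applied to it would run to [true]: both clauses used are non-unit.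
   The resolution steps instantiate the (ground) input arguments of both
   heads to those of the selected atom, so the input arguments of the two
   clauses are unifiable.  Both guards were run to completion with success,
   and by safety every variable of a guard disequation is either an input
   variable, already ground after unification, or a local variable, left
   untouched by the most general unifier; hence the guards are satisfied by
   the common instance of the input variables, contradicting mutual
   exclusion. *)

Fixpoint term_nested_ind (Q : term -> Prop) (HV : forall x, Q (Var x))
  (HF : forall f ts, Forall Q ts -> Q (Fn f ts)) (t : term) : Q t :=
  match t with
  | Var x => HV x
  | Fn f ts => HF f ts ((fix go (l : list term) : Forall Q l :=
      match l with
      | [] => Forall_nil _
      | u :: l' => Forall_cons _ (term_nested_ind Q HV HF u) (go l')
      end) ts)
  end.

Lemma tvars_Fn f ts : tvars (Fn f ts) = flat_map tvars ts.
Proof. simpl. induction ts; simpl; congruence. Qed.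

Lemma tsubst_ext t s1 s2 :
  (forall x, In x (tvars t) -> s1 x = s2 x) -> tsubst s1 t = tsubst s2 t.
Proof.
  revert s1 s2; induction t as [x | f ts IH] using term_nested_ind; intros s1 s2 Hs.
  - apply Hs; simpl; auto.
  - rewrite tvars_Fn in Hs. simpl. f_equal.
    induction IH as [|u ts Hu _ IHts]; simpl in *; [reflexivity|].
    f_equal; [apply Hu | apply IHts]; intros; apply Hs, in_or_app; auto.
Qed.

Lemma tsubst_tsubst t s1 s2 :
  tsubst s2 (tsubst s1 t) = tsubst (fun x => tsubst s2 (s1 x)) t.
Proof.
  induction t as [x | f ts IH] using term_nested_ind; simpl; auto.
  f_equal. rewrite map_map. induction IH; simpl; f_equal; auto.
Qed.

Lemma tsubst_Var t : tsubst Var t = t.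
Proof.
  induction t as [x | f ts IH] using term_nested_ind; simpl; auto.
  f_equal. induction IH; simpl; f_equal; auto.
Qed.

Lemma tvars_tsubst t s : tvars (tsubst s t) = flat_map (fun y => tvars (s y)) (tvars t).
Proof.
  induction t as [x | f ts IH] using term_nested_ind.
  - simpl. rewrite app_nil_r. reflexivity.
  - change (tsubst s (Fn f ts)) with (Fn f (map (tsubst s) ts)). rewrite !tvars_Fn.
    induction IH; simpl; auto. rewrite flat_map_app. f_equal; auto.
Qed.

Lemma gsubst_gsubst G s1 s2 :
  gsubst s2 (gsubst s1 G) = gsubst (fun x => tsubst s2 (s1 x)) G.
Proof.
  unfold gsubst. rewrite map_map. apply map_ext. intros [u v | u v | q us]; simpl;
    rewrite ?tsubst_tsubst; auto.
  rewrite map_map. f_equal. apply map_ext. intro. apply tsubst_tsubst.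
Qed.

Lemma ground_tsubst_var s t y : ground (tsubst s t) -> In y (tvars t) -> ground (s y).
Proof.
  unfold ground. rewrite tvars_tsubst. intros Ht Hy.
  destruct (tvars (s y)) as [|z zs] eqn:E; auto.
  assert (Hz : In z (flat_map (fun y => tvars (s y)) (tvars t))).
  { apply in_flat_map. exists y. rewrite E. simpl. auto. }
  rewrite Ht in Hz. destruct Hz.
Qed.

Lemma tsubst_ground s t : ground t -> tsubst s t = t.
Proof.
  intros Ht. rewrite <- (tsubst_Var t) at 2. apply tsubst_ext.
  unfold ground in Ht. rewrite Ht. intros x [].
Qed.

Lemma map_tsubst_ground s L : Forall ground L -> map (tsubst s) L = L.
Proof. induction 1; simpl; f_equal; auto using tsubst_ground. Qed.

Lemma tsvars_ground_instance s L L' y :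
  map (tsubst s) L = L' -> Forall ground L' -> In y (tsvars L) -> ground (s y).
Proof.
  intros <- Hg Hy. unfold tsvars in Hy. apply in_flat_map in Hy as [t [Ht Hyt]].
  rewrite Forall_forall in Hg. apply (ground_tsubst_var s t); auto.
  apply Hg, in_map; auto.
Qed.

Lemma tvars_rename r t : tvars (tsubst (renaming r) t) = map r (tvars t).
Proof. rewrite tvars_tsubst. induction (tvars t); simpl; f_equal; auto. Qed.

Lemma tsvars_rename r ts : tsvars (map (tsubst (renaming r)) ts) = map r (tsvars ts).
Proof.
  unfold tsvars. induction ts; simpl; auto. rewrite map_app, tvars_rename. f_equal; auto.
Qed.

Lemma gvars_rename r G : gvars (gsubst (renaming r) G) = map r (gvars G).
Proof.
  unfold gvars, gsubst. induction G as [|A G IH]; simpl; auto. rewrite map_app, IH. f_equal.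
  destruct A; simpl; rewrite ?map_app, ?tvars_rename; auto using tsvars_rename.
Qed.

Lemma cvars_rename r C : cvars (rename_clause r C) = map r (cvars C).
Proof. unfold cvars. simpl. rewrite map_app, tsvars_rename, gvars_rename. reflexivity. Qed.

Lemma renamed_apart_exists C V : exists C', renamed_apart C' C V.
Proof.
  set (N := S (list_max V)).
  exists (rename_clause (fun x => x + N) C), (fun x => x + N).
  split; [intros; lia | split; [reflexivity |]].
  intros y Hy HyV. rewrite cvars_rename in Hy. apply in_map_iff in Hy as [x [<- _]].
  pose proof (proj1 (list_max_le V (list_max V)) (le_n _)) as Hmax.
  rewrite Forall_forall in Hmax. specialize (Hmax _ HyV). unfold N in Hmax. lia.
Qed.

Lemma subst_after_injective (r : nat -> nat) (L : list nat) (s : subst) :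
  (forall x y, r x = r y -> x = y) -> exists d : subst, forall x, In x L -> d (r x) = s x.
Proof.
  intros Hr. induction L as [|a L [d Hd]].
  - exists Var. intros x [].
  - exists (fun y => if Nat.eq_dec y (r a) then s a else d y).
    intros x Hx. destruct (Nat.eq_dec (r x) (r a)) as [E|E].
    + apply Hr in E. subst. reflexivity.
    + destruct Hx as [<- | Hx]; [contradiction | auto].
Qed.

Lemma subst_glue (V L : list nat) (r : nat -> nat) (s1 s2 : subst) :
  (forall x y, r x = r y -> x = y) -> (forall x, In x L -> ~ In (r x) V) ->
  exists sigma : subst,
    (forall x, In x V -> sigma x = s1 x) /\ (forall x, In x L -> sigma (r x) = s2 x).
Proof.
  intros Hr Hdis. destruct (subst_after_injective r L s2 Hr) as [d Hd].
  exists (fun y => if in_dec Nat.eq_dec y V then s1 y else d y).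
  split; intros x Hx; destruct in_dec; auto; [contradiction | contradiction (Hdis x Hx)].
Qed.

Definition subst_restrict (V : list nat) (s : subst) : subst :=
  fun y => if in_dec Nat.eq_dec y V then s y else Var y.

Lemma mgu_unifier_absorb {th sigma ts us} :
  mgu th ts us -> unifier sigma ts us -> forall x, tsubst sigma (th x) = sigma x.
Proof.
  intros (_ & Hgen & Hidem & _) Hsigma x. destruct (Hgen _ Hsigma) as [d Hd].
  transitivity (tsubst (fun y => tsubst d (th y)) (th x)).
  - apply tsubst_ext. intros. apply Hd.
  - rewrite <- tsubst_tsubst, Hidem. symmetry. apply Hd.
Qed.

Lemma mgu_restrict_absorb th sigma ts us (V := tsvars ts ++ tsvars us) :
  mgu th ts us -> unifier sigma ts us ->
  forall t, tsubst (subst_restrict V sigma) (tsubst th t) = tsubst (subst_restrict V sigma) t.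
Proof.
  intros Hmgu Hsigma t. rewrite tsubst_tsubst. apply tsubst_ext. intros x _.
  pose proof (proj2 (proj2 (proj2 Hmgu))) as Hrel.
  destruct (classic (th x = Var x)) as [Hfix | Hmoved]; [rewrite Hfix; reflexivity |].
  destruct (Hrel x Hmoved) as [HxV HthV].
  unfold subst_restrict at 2. destruct in_dec; [| contradiction].
  rewrite <- (mgu_unifier_absorb Hmgu Hsigma x). apply tsubst_ext.
  intros y Hy. unfold subst_restrict. destruct in_dec; auto.
  contradiction (HthV y Hy).
Qed.

Lemma satisfiable_of_unifier {th sigma ts us} (D : goal) (V := tsvars ts ++ tsvars us) :
  mgu th ts us -> unifier sigma ts us -> (forall y, In y V -> ground (sigma y)) ->
  (forall rr, ground_subst rr -> goal_holds (gsubst rr (gsubst (subst_restrict V sigma) D))) ->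
  satisfiable_wrt V (gsubst th D).
Proof.
  intros Hmgu Hsigma Hground Hholds. exists (subst_restrict V sigma). split; [| split].
  - intros y Hy. unfold subst_restrict. destruct in_dec; [auto | contradiction].
  - intros y Hy. unfold subst_restrict. destruct in_dec; [contradiction | reflexivity].
  - intros rr Hrr. replace (gsubst (subst_restrict V sigma) (gsubst th D))
      with (gsubst (subst_restrict V sigma) D); [apply Hholds; auto |].
    unfold gsubst. rewrite map_map. apply map_ext.
    intros [u v | u v | q ws]; simpl; rewrite ?(mgu_restrict_absorb _ _ _ _ Hmgu Hsigma); auto.
    rewrite map_map. f_equal. apply map_ext. intro.
    symmetry. apply (mgu_restrict_absorb _ _ _ _ Hmgu Hsigma).
Qed.

Lemma gsubst_app s G H : gsubst s (G ++ H) = gsubst s G ++ gsubst s H.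
Proof. apply map_app. Qed.

Lemma input_args_map M p f ts : input_args M p (map f ts) = map f (input_args M p ts).
Proof.
  unfold input_args. rewrite length_map. destruct (M p (length ts)) as [ms|]; auto.
  revert ts; induction ms as [|[|] ms IH]; intros [|t ts]; simpl; f_equal; auto.
Qed.

Lemma input_vars_head_cvars M C x : In x (input_vars_head M C) -> In x (cvars C).
Proof.
  unfold input_vars_head, input_args, cvars, tsvars. intros Hx. apply in_or_app. left.
  apply in_flat_map in Hx as [t [Ht Hxt]]. apply in_flat_map. exists t. split; auto.
  destruct (M (hd_pred C) (length (hd_args C))) as [ms|]; [| destruct Ht].
  revert Ht. generalize (hd_args C). clear.
  induction ms as [|[|] ms IH]; intros [|u us]; simpl; try tauto;
    [intros [<- | Ht] |]; auto.
Qed.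

Lemma neq_prefix_prefix G : exists rest, G = neq_prefix G ++ rest.
Proof.
  induction G as [|A G [rest IH]]; simpl; [exists []; reflexivity |].
  destruct (is_neq A); [exists rest; simpl; congruence | exists (A :: G); reflexivity].
Qed.

Lemma grd_prefix C : exists rest, bd C = grd C ++ rest.
Proof.
  unfold grd. destruct (forallb is_neq (bd C)); [| apply neq_prefix_prefix].
  exists []. rewrite app_nil_r. reflexivity.
Qed.

Lemma grd_disequation C A : In A (grd C) -> is_neq A = true.
Proof.
  unfold grd. destruct (forallb is_neq (bd C)) eqn:E.
  - rewrite forallb_forall in E. auto.
  - clear E. induction (bd C) as [|B G IH]; simpl; [tauto |].
    destruct (is_neq B) eqn:EB; simpl; [intros [<- | HA]; auto | tauto].
Qed.

Lemma is_neq_asubst s A : is_neq (asubst s A) = is_neq A.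
Proof. destruct A; reflexivity. Qed.

Lemma grd_rename r C : grd (rename_clause r C) = gsubst (renaming r) (grd C).
Proof.
  unfold grd, rename_clause, gsubst. simpl.
  replace (forallb is_neq (map (asubst (renaming r)) (bd C))) with (forallb is_neq (bd C))
    by (induction (bd C); simpl; rewrite ?is_neq_asubst; congruence).
  destruct (forallb is_neq (bd C)); auto.
  induction (bd C) as [|A G IH]; simpl; auto.
  rewrite is_neq_asubst. destruct (is_neq A); simpl; f_equal; auto.
Qed.

Definition nonbasicb (A : atom) : bool := match A with APred _ _ => true | _ => false end.

Definition nonbasic_count (G : goal) : nat := length (filter nonbasicb G).

Lemma nonbasic_count_app G H : nonbasic_count (G ++ H) = nonbasic_count G + nonbasic_count H.
Proof. unfold nonbasic_count. rewrite filter_app, length_app. reflexivity. Qed.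

Lemma nonbasic_count_gsubst s G : nonbasic_count (gsubst s G) = nonbasic_count G.
Proof.
  unfold nonbasic_count, gsubst. induction G as [|A G IH]; simpl; auto.
  destruct A; simpl; auto.
Qed.

Lemma unit_clause_nonbasic_count C : unit_clause C -> nonbasic_count (bd C) = 0.
Proof.
  unfold unit_clause, basic_goal, nonbasic_count.
  induction 1 as [|A G HA]; simpl; auto. destruct A; simpl in *; tauto.
Qed.

Lemma step_nonbasic_count {P oc G G'} :
  linear P -> step P oc G G' -> nonbasic_count G' <= nonbasic_count G.
Proof.
  intros Hlin Hstep. destruct Hstep as [| | p ts G C C' th HC (r & _ & -> & _) _ _].
  - rewrite nonbasic_count_gsubst. unfold nonbasic_count. simpl. lia.
  - unfold nonbasic_count. simpl. lia.
  - rewrite nonbasic_count_gsubst, nonbasic_count_app. simpl.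
    rewrite nonbasic_count_gsubst. specialize (Hlin C HC).
    change (nonbasic_count (bd C) <= 1) in Hlin. unfold nonbasic_count in *. simpl. lia.
Qed.

Lemma steps_trans P G1 G2 G3 : steps P G1 G2 -> steps P G2 G3 -> steps P G1 G3.
Proof. induction 1; eauto using steps. Qed.

Lemma basic_run_steps P G G' : basic_run P G G' -> steps P G G'.
Proof. induction 1; eauto using steps. Qed.

Lemma big_steps_steps {P G G'} : big_steps P G G' -> steps P G G'.
Proof.
  induction 1 as [| C G1 G2 G3 _ (G & Hstep & Hrun) _ IH]; [constructor |].
  apply steps_trans with G2; auto. econstructor; [exists (Some C); eauto |].
  apply basic_run_steps; auto.
Qed.

Lemma steps_nonbasic_count {P G G'} :
  linear P -> steps P G G' -> nonbasic_count G' <= nonbasic_count G.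
Proof.
  intros Hlin. induction 1 as [| G1 G2 G3 [oc Hstep] _ IH]; auto.
  apply (step_nonbasic_count Hlin) in Hstep. lia.
Qed.

(* A basic run performs no resolution step, so it cannot create non-basic atoms. *)
Lemma basic_run_true {P G G'} : basic_run P G G' -> nonbasic_count G = 0 -> G' = [].
Proof.
  induction 1 as [| A G HA | A G G1 G2 HA [oc Hstep] _ IH]; intros HG; auto.
  - destruct A; simpl in HA; try contradiction. discriminate.
  - apply IH. inversion Hstep; subst; simpl in HA; try contradiction;
      rewrite ?nonbasic_count_gsubst; exact HG.
Qed.

Lemma basic_run_disequations P N H G' :
  basic_run P (N ++ H) G' -> (forall A, In A N -> is_neq A = true) ->
  forall u v, In (ANeq u v) N -> ~ unifiable [u] [v].
Proof.
  revert H G'. induction N as [|A N IH]; intros H G' Hrun HN u v Huv; [destruct Huv |].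
  destruct A; try discriminate (HN _ (or_introl eq_refl)).
  inversion Hrun as [| ? ? Hnb | ? ? ? ? _ [oc Hstep] Hrun']; subst; [destruct Hnb |].
  inversion Hstep; subst. destruct Huv as [[= <- <-] | Huv]; auto.
  eapply IH; eauto. intros; apply HN; simpl; auto.
Qed.

Set Implicit Arguments.

Record resolution (P : program) (C : clause) (r : nat -> nat) (th : subst)
    (p : nat) (ts : list term) (R G' : goal) : Prop := {
  res_inj : forall x y, r x = r y -> x = y;
  res_apart : forall x, In x (cvars (rename_clause r C)) -> ~ In x (gvars (APred p ts :: R));
  res_pred : p = hd_pred C;
  res_mgu : mgu th ts (hd_args (rename_clause r C));
  res_run : basic_run P (gsubst th (bd (rename_clause r C) ++ R)) G'
}.

Unset Implicit Arguments.

Lemma big_step_resolution {P C G G'} :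
  big_step P C G G' ->
  exists p ts R r th, G = APred p ts :: R /\ resolution P C r th p ts R G'.
Proof.
  intros (G1 & Hstep & Hrun).
  inversion Hstep as [| | p ts R C0 C' th _ Hren Hp Hmgu]; subst. clear Hstep.
  destruct Hren as (r & Hinj & -> & Hapart).
  exists (hd_pred C), ts, R, r, th. split; [reflexivity | constructor; auto].
Qed.

Lemma resolution_arity {P C r th p ts R G'} :
  resolution P C r th p ts R G' -> length (hd_args C) = length ts.
Proof.
  intros Hres. destruct (res_mgu Hres) as [Hu _]. apply (f_equal (@length _)) in Hu.
  simpl in Hu. rewrite !length_map in Hu. auto.
Qed.

Section Resolution.

Context {P : program} {M : mode} {C : clause} {r : nat -> nat} {th : subst}
  {p : nat} {ts : list term} {R G' : goal}.
Hypothesis Hres : resolution P C r th p ts R G'.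

Lemma resolution_nonunit : nonbasic_count R = 0 -> G' <> [] -> ~ unit_clause C.
Proof.
  intros HR HG' Hunit. apply HG', (basic_run_true (res_run Hres)).
  rewrite nonbasic_count_gsubst, nonbasic_count_app, HR. simpl.
  rewrite nonbasic_count_gsubst, unit_clause_nonbasic_count; auto.
Qed.

Hypothesis Hinputs : Forall ground (input_args M p ts).

Lemma resolution_inputs (tau : subst) :
  (forall x, In x (input_vars_head M C) -> tau x = th (r x)) ->
  map (tsubst tau) (input_args M (hd_pred C) (hd_args C)) = input_args M p ts.
Proof.
  intros Htau.
  transitivity (map (tsubst th) (map (tsubst (renaming r)) (input_args M (hd_pred C) (hd_args C)))).
  - rewrite map_map. apply map_ext_in. intros t Ht. rewrite tsubst_tsubst. apply tsubst_ext.
    intros x Hx. apply Htau. unfold input_vars_head, tsvars. apply in_flat_map. eauto.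
  - destruct (res_mgu Hres) as [Hu _]. unfold unifier in Hu. simpl in Hu.
    rewrite <- !input_args_map, <- Hu, <- (res_pred Hres), input_args_map.
    apply map_tsubst_ground, Hinputs.
Qed.

Lemma input_var_ground x : In x (input_vars_head M C) -> ground (th (r x)).
Proof.
  apply (tsvars_ground_instance (fun y => th (r y)) _ (input_args M p ts)); auto.
  apply resolution_inputs. reflexivity.
Qed.

Lemma mgu_fixes_nonhead_var x :
  In x (cvars C) -> ~ In x (tsvars (hd_args C)) -> th (r x) = Var (r x).
Proof.
  intros HxC Hxh. apply NNPP. intro Hmoved.
  destruct (proj2 (proj2 (proj2 (res_mgu Hres))) _ Hmoved) as [Hin _].
  apply in_app_or in Hin as [Hin | Hin].
  - apply (res_apart Hres (r x)); [rewrite cvars_rename; apply in_map; auto |].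
    simpl. apply in_or_app. auto.
  - simpl in Hin. rewrite tsvars_rename in Hin. apply in_map_iff in Hin as [y [Hy Hyh]].
    apply (res_inj Hres) in Hy. subst. contradiction.
Qed.

Lemma guard_not_unifiable u v :
  In (ANeq u v) (grd C) ->
  ~ unifiable [tsubst th (tsubst (renaming r) u)] [tsubst th (tsubst (renaming r) v)].
Proof.
  intros Huv. destruct (grd_prefix C) as [rest Hrest].
  apply (basic_run_disequations P (gsubst th (gsubst (renaming r) (grd C)))
           (gsubst th (gsubst (renaming r) rest ++ R)) G').
  - pose proof (res_run Hres) as Hrun. simpl in Hrun. rewrite Hrest in Hrun.
    unfold gsubst in *. rewrite !map_app, <- app_assoc in Hrun. rewrite map_app. exact Hrun.
  - intros A HA. unfold gsubst in HA. rewrite map_map, in_map_iff in HA.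
    destruct HA as [A0 [<- HA0]]. rewrite !is_neq_asubst. apply (grd_disequation C), HA0.
  - apply (in_map (fun A => asubst th (asubst (renaming r) A))) in Huv.
    unfold gsubst. rewrite map_map. exact Huv.
Qed.

(* By safety, on the variables of a guard disequation [tau] is an instance of
   [th o r], so it cannot equate the two sides of an executed disequation. *)
Lemma guard_holds (tau : subst) :
  safe_clause M C ->
  (forall x, In x (input_vars_head M C) -> tau x = th (r x)) ->
  goal_holds (gsubst tau (grd C)).
Proof.
  intros Hsafe Htau. unfold goal_holds, gsubst. apply Forall_forall.
  intros B HB. apply in_map_iff in HB as [A [<- HA]].
  pose proof (grd_disequation C A HA) as Hneq. destruct A as [| u v |]; try discriminate.
  simpl. intro Heq.
  destruct (grd_prefix C) as [rest Hrest]. destruct (in_split _ _ HA) as (N1 & N2 & HN).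
  assert (Hbd : bd C = N1 ++ ANeq u v :: N2 ++ rest)
    by (rewrite Hrest, HN, <- app_assoc; reflexivity).
  destruct (subst_after_injective r (cvars C) tau (res_inj Hres)) as [d Hd].
  assert (Hinst : forall x, In x (avars (ANeq u v)) -> tsubst d (th (r x)) = tau x).
  { intros x Hx.
    assert (HxC : In x (cvars C)).
    { unfold cvars. apply in_or_app. right. apply in_flat_map.
      exists (ANeq u v). rewrite Hrest. split; [apply in_or_app | ]; auto. }
    destruct (Hsafe _ _ _ _ Hbd x Hx) as [Hin | Hloc].
    - rewrite (Htau x Hin). apply tsubst_ground, input_var_ground, Hin.
    - rewrite mgu_fixes_nonhead_var; [apply Hd, HxC | exact HxC |].
      intro. apply Hloc, in_or_app. auto. }
  apply (guard_not_unifiable u v HA). exists d. unfold unifier. simpl. f_equal.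
  rewrite !tsubst_tsubst. simpl.
  transitivity (tsubst tau u); [| transitivity (tsubst tau v); [exact Heq |]];
    apply tsubst_ext; intros x Hx; [| symmetry]; apply Hinst; simpl; apply in_or_app; auto.
Qed.

End Resolution.

Lemma resolutions_not_mutually_exclusive {P M C1 C2 C2' r1 r2 th1 th2 p ts R G1 G2} :
  safe_clause M C1 -> safe_clause M C2 -> Forall ground (input_args M p ts) ->
  resolution P C1 r1 th1 p ts R G1 -> resolution P C2 r2 th2 p ts R G2 ->
  renamed_apart C2' C2 (cvars C1) -> ~ mutually_exclusive M C1 C2'.
Proof.
  intros Hsafe1 Hsafe2 Hinputs Hres1 Hres2 (rho & Hrho & -> & Hapart).
  assert (Hapart' : forall x, In x (cvars C2) -> ~ In (rho x) (cvars C1)).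
  { intros x Hx. apply Hapart. rewrite cvars_rename. apply in_map, Hx. }
  destruct (subst_glue (cvars C1) (cvars C2) rho (fun x => th1 (r1 x)) (fun x => th2 (r2 x))
              Hrho Hapart') as (sigma & Hsigma1 & Hsigma2).
  unfold mutually_exclusive. simpl hd_pred. simpl hd_args. rewrite input_args_map.
  set (t1 := input_args M (hd_pred C1) (hd_args C1)).
  set (t2 := input_args M (hd_pred C2) (hd_args C2)).
  assert (Hin1 : forall x, In x (tsvars t1) -> sigma x = th1 (r1 x))
    by (intros; apply Hsigma1, (input_vars_head_cvars M); auto).
  assert (Hin2 : forall x, In x (tsvars t2) -> sigma (rho x) = th2 (r2 x))
    by (intros; apply Hsigma2, (input_vars_head_cvars M); auto).
  assert (Hsigma_t1 : map (tsubst sigma) t1 = input_args M p ts)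
    by exact (resolution_inputs Hres1 Hinputs sigma Hin1).
  assert (Hsigma_t2 : map (tsubst sigma) (map (tsubst (renaming rho)) t2) = input_args M p ts).
  { rewrite map_map, <- (resolution_inputs Hres2 Hinputs _ Hin2).
    apply map_ext. intro. apply tsubst_tsubst. }
  assert (Hunif : unifier sigma t1 (map (tsubst (renaming rho)) t2))
    by (unfold unifier; congruence).
  intros [Hnu | (th & Hmgu & Hunsat)]; [apply Hnu; exists sigma; exact Hunif |].
  apply Hunsat, (satisfiable_of_unifier _ Hmgu Hunif).
  - intros y Hy. apply in_app_or in Hy as [Hy | Hy].
    + exact (tsvars_ground_instance sigma _ _ y Hsigma_t1 Hinputs Hy).
    + exact (tsvars_ground_instance sigma _ _ y Hsigma_t2 Hinputs Hy).
  - intros rr _. rewrite grd_rename, !gsubst_app, !gsubst_gsubst.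
    apply Forall_app. split.
    + apply (guard_holds Hres1 Hinputs); auto. intros x Hx.
      unfold subst_restrict. destruct in_dec as [_ | Hx']; [| contradiction Hx'; apply in_or_app; auto].
      rewrite Hin1; auto. apply tsubst_ground, (input_var_ground Hres1 Hinputs), Hx.
    + apply (guard_holds Hres2 Hinputs); auto. intros x Hx. simpl.
      unfold subst_restrict. destruct in_dec as [_ | Hx'].
      * rewrite Hin2; auto. apply tsubst_ground, (input_var_ground Hres2 Hinputs), Hx.
      * contradiction Hx'. apply in_or_app. right. rewrite tsvars_rename. apply in_map, Hx.
Qed.

Theorem proposition2 (P : program) (M : mode) :
  mode_for M P ->
  linear P ->
  safe P M ->
  program_satisfies P M ->
  nonunit_pairwise_ME P M ->
  semidet P M.
Proof.
  intros _ Hlin Hsafe Hsat HME A HA HAmode G Hreach C1 C2 G1 G2 HC1 HC2 Hstep1 HG1 Hstep2 HG2.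
  destruct (big_step_resolution Hstep1) as (p & ts & R & r1 & th1 & -> & Hres1).
  destruct (big_step_resolution Hstep2) as (p' & ts' & R' & r2 & th2 & [= <- <- <-] & Hres2).
  pose proof (big_steps_steps Hreach) as Hsteps.
  assert (Hinputs : Forall ground (input_args M p ts))
    by exact (proj2 (Hsat A HA HAmode _ _ Hsteps I)).
  assert (HR : nonbasic_count R = 0).
  { apply (steps_nonbasic_count Hlin) in Hsteps.
    destruct A; try contradiction. unfold nonbasic_count in *. simpl in Hsteps. lia. }
  apply NNPP. intro Hne.
  destruct (renamed_apart_exists C2 (cvars C1)) as [C2' HC2'].
  apply (resolutions_not_mutually_exclusive (Hsafe C1 HC1) (Hsafe C2 HC2) Hinputs Hres1 Hres2 HC2').
  apply (HME C1 C2); auto.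
  - exact (resolution_nonunit Hres1 HR HG1).
  - exact (resolution_nonunit Hres2 HR HG2).
  - rewrite <- (res_pred Hres1), <- (res_pred Hres2). reflexivity.
  - rewrite (resolution_arity Hres1), (resolution_arity Hres2). reflexivity.
Qed.
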